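(* Let $w\in\Sigma^*$ and let $u$ be a scattered factor of $w$. Then $C(w,u)=\{u\}$ if and only if $w$ is the perfect shuffle of $u$ with itself, i.e., $w=u[1]u[1]u[2]u[2]\cdots u[|u|]u[|u|]$.
   Context: An embedding of $u$ in $w$ is a map $e:\{1,\dots,|u|\}\to\{1,\dots,|w|\}$ with $e(1)<\dots<e(|u|)$ and $u[i]=w[e(i)]$. The shuffle $\mathrm{Sh}(u,v)$ is the set of words of length $|u|+|v|$ admitting an embedding of $u$ and one of $v$ with disjoint images covering all positions, and $C(w,u)=\{v\in\Sigma^{|w|-|u|}: w\in\mathrm{Sh}(u,v)\}$. For words $u,v$ of equal length $m$, the perfect shuffle is $u[1]v[1]u[2]v[2]\cdots u[m]v[m]$. *)

From mathcomp Require Import all_boot.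
Set Implicit Arguments. Unset Strict Implicit. Unset Printing Implicit Defensive.

Section Words.
Variable Sigma : eqType.

Definition embedding (u w : seq Sigma) (e : 'I_(size u) -> 'I_(size w)) : Prop :=
  (forall i j : 'I_(size u), i < j -> e i < e j) /\
  (forall i : 'I_(size u), tnth (in_tuple u) i = tnth (in_tuple w) (e i)).

Definition scattered_factor (u w : seq Sigma) : Prop :=
  exists e, @embedding u w e.

Definition in_shuffle (u v w : seq Sigma) : Prop :=
  size w = size u + size v /\
  exists (e1 : 'I_(size u) -> 'I_(size w)) (e2 : 'I_(size v) -> 'I_(size w)),
    [/\ embedding e1, embedding e2,
        (forall i j, e1 i <> e2 j) &
        (forall k, (exists i, e1 i = k) \/ (exists j, e2 j = k))].

Definition Cset (w u : seq Sigma) (v : seq Sigma) : Prop :=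
  size v = size w - size u /\ in_shuffle u v w.

Definition perfect_shuffle (u v : seq Sigma) : seq Sigma :=
  flatten [seq [:: p.1; p.2] | p <- zip u v].

End Words.

From mathcomp Require Import all_boot.
Set Implicit Arguments. Unset Strict Implicit. Unset Printing Implicit Defensive.

(* If w = u[1]u[1]...u[n]u[n], read w
   from the left two letters at a time: after each block u[k]u[k], one copy of u
   can be ahead of the other only by a run of equal letters, and this forces the
   complement of u to spell u again.  Conversely, if u is its own only
   complement in w = u[1]w', then every complement of u[2..n] in w' is u;
   choosing one that uses the letter w'[1] shows w'[1] = u[1], and u[2..n] is
   then its own only complement in w'[2..]. *)

Section Shuffle.
Variable T : eqType.
Implicit Types (a b : T) (u v w x y z q : seq T) (m : bitseq).

Inductive shuffle : seq T -> seq T -> seq T -> Prop :=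
| shuffle_nil : shuffle [::] [::] [::]
| shuffle_consl a u v w : shuffle u v w -> shuffle (a :: u) v (a :: w)
| shuffle_consr a u v w : shuffle u v w -> shuffle u (a :: v) (a :: w).

Lemma shuffle_nilE u v : shuffle u v [::] -> u = [::] /\ v = [::].
Proof. by move=> sh; inversion sh. Qed.

Lemma shuffle_consE u v a w : shuffle u v (a :: w) ->
  (exists2 u', u = a :: u' & shuffle u' v w) \/
  (exists2 v', v = a :: v' & shuffle u v' w).
Proof. by move=> sh; inversion sh; [left | right]; eexists. Qed.

Lemma shuffle_cons2E u v a w : shuffle u v (a :: a :: w) ->
  [\/ exists2 u', u = a :: a :: u' & shuffle u' v w,
      exists u' v', [/\ u = a :: u', v = a :: v' & shuffle u' v' w]
    | exists2 v', v = a :: a :: v' & shuffle u v' w].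
Proof.
case/shuffle_consE=> [[u1 -> /shuffle_consE [[u' -> sh] | [v' -> sh]]] |
                      [v1 -> /shuffle_consE [[u' -> sh] | [v' -> sh]]]].
- by apply: Or31; exists u'.
- by apply: Or32; exists u1, v'.
- by apply: Or32; exists u', v1.
- by apply: Or33; exists v'.
Qed.

Lemma size_shuffle u v w : shuffle u v w -> size w = size u + size v.
Proof. by elim=> //= *; rewrite ?addSn ?addnS; congr _.+1. Qed.

Lemma shuffle_sym u v w : shuffle u v w -> shuffle v u w.
Proof. by elim=> *; constructor. Qed.

Lemma shuffle0s w : shuffle [::] w w.
Proof. by elim: w => *; constructor. Qed.

Lemma shuffle_subseq u v w : shuffle u v w -> subseq u w.
Proof.
elim=> //= a {}u {}v {}w _ sub_uw; first by rewrite eqxx.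
exact: subseq_trans sub_uw (subseq_cons w a).
Qed.

Lemma mask_shuffle m w : size m = size w ->
  shuffle (mask m w) (mask (map negb m) w) w.
Proof.
elim: w m => [|a w IHw] [|b m] //= => [_ | [/IHw sh]]; first exact: shuffle_nil.
by case: b; [apply: shuffle_consl | apply: shuffle_consr].
Qed.

Lemma shuffle_mask u v w : shuffle u v w ->
  exists m, [/\ size m = size w, mask m w = u & mask (map negb m) w = v].
Proof.
elim=> [|a {}u {}v {}w _ [m [size_m <- <-]]|a {}u {}v {}w _ [m [size_m <- <-]]].
- by exists [::].
- by exists (true :: m); rewrite /= size_m.
- by exists (false :: m); rewrite /= size_m.
Qed.

Lemma subseq_shuffle u w : subseq u w -> exists v, shuffle u v w.
Proof. by case/subseqP=> m size_m ->; eexists; apply: mask_shuffle. Qed.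

Local Notation doubled u := (perfect_shuffle u u).

Lemma doubled_cons a u : doubled (a :: u) = a :: a :: doubled u.
Proof. by []. Qed.

Lemma shuffle_doubled u : shuffle u u (doubled u).
Proof.
elim: u => [|a u IHu]; first exact: shuffle_nil.
exact/shuffle_consl/shuffle_consr.
Qed.

Lemma cat_nseq_cons n a s : nseq n a ++ a :: s = a :: nseq n a ++ s.
Proof. by elim: n => //= n ->. Qed.

Lemma constant_rcons y b : constant (rcons y b) -> y = nseq (size y) b.
Proof.
case: y => //= c y; rewrite all_rcons /= => /andP[/eqP <-].
by move/all_pred1P <-.
Qed.

(* Invariants for the unread part doubled x of a doubled word: if one word of
   the shuffle still has to spell y ++ x, then it lags behind the other by the
   block y, which is a run of equal letters; and if one word is ahead by a run
   of equal letters, then the other lags behind by the same run. *)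
Definition complement_of_lagging x := forall y q,
  shuffle (y ++ x) q (doubled x) -> constant y /\ x = y ++ q.

Definition complement_of_leading x := forall n b z q,
  x = nseq n b ++ z -> shuffle z q (doubled x) -> q = nseq n b ++ x.

Lemma complement_of_lagging_cons b x :
  complement_of_lagging x -> complement_of_leading x ->
  complement_of_lagging (b :: x).
Proof.
move=> IHlag IHlead y q; rewrite doubled_cons.
case/shuffle_cons2E => [[u' y_eq sh] | [u' [q' [y_eq -> sh]]] | [q' -> sh]].
- case: y y_eq sh => [[x_eq] sh | c [[-> <-] sh | c' y [-> -> <-]]].
  + by rewrite (IHlead 1 b u' q x_eq sh) x_eq.
  + by have [_ ->] := IHlag [::] q sh.
  + rewrite -cat_rcons => /IHlag[/constant_rcons y_eq ->].
    rewrite cat_rcons y_eq cat_nseq_cons.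
    by split; first exact: (constant_nseq (size y).+2).
- case: y y_eq sh => [[<-] sh | c y [-> <-]].
  + by have [_ ->] := IHlag [::] q' sh.
  + rewrite -cat_rcons => /IHlag[/constant_rcons y_eq ->].
    rewrite cat_rcons y_eq.
    by split; first exact: (constant_nseq (size y).+1).
- move: sh; rewrite -cat_rcons => /IHlag[/constant_rcons y_eq ->].
  by rewrite cat_rcons y_eq constant_nseq !cat_nseq_cons.
Qed.

Lemma complement_of_leading_cons b x :
  complement_of_leading x -> complement_of_lagging (b :: x) ->
  complement_of_leading (b :: x).
Proof.
move=> IHlead lag_bx [|n] c z q /=.
  by move=> <- /(lag_bx [::])[_ ->].
case=> <- x_eq; rewrite doubled_cons.
case/shuffle_cons2E => [[z' z_eq sh] | [z' [q' [z_eq -> sh]]] | [q' -> sh]].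
- have x_eq' : x = nseq n.+2 b ++ z' by rewrite x_eq z_eq !cat_nseq_cons.
  by rewrite (IHlead _ _ _ _ x_eq' sh) /= cat_nseq_cons.
- have x_eq' : x = nseq n.+1 b ++ z' by rewrite x_eq z_eq cat_nseq_cons.
  by rewrite (IHlead _ _ _ _ x_eq' sh) /= cat_nseq_cons.
- by rewrite (IHlead _ _ _ _ x_eq sh) cat_nseq_cons.
Qed.

Lemma doubled_complements x : complement_of_lagging x /\ complement_of_leading x.
Proof.
elim: x => [|b x [IHlag IHlead]].
  split=> [y q | n b z q]; first by rewrite cats0 => /shuffle_nilE[-> ->].
  by case: n z => [|n] [|c z] // _ /shuffle_nilE[_ ->].
have lag_bx : complement_of_lagging (b :: x) by apply: complement_of_lagging_cons.
by split; last exact: complement_of_leading_cons.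
Qed.

Lemma shuffle_doubledE u v : shuffle u v (doubled u) -> v = u.
Proof. by move=> /((doubled_complements u).1 [::])[_ ->]. Qed.

Lemma unique_shuffle_complementP u w :
  (forall v, shuffle u v w <-> v = u) <-> w = doubled u.
Proof.
split=> [|->{w} v]; last first.
  by split=> [/shuffle_doubledE | ->] //; apply: shuffle_doubled.
elim: u w => [|a u IHu] w uniq_cpl; first by have /uniq_cpl := shuffle0s w.
have := (uniq_cpl (a :: u)).2 erefl.
case: w uniq_cpl => [_ /shuffle_nilE[] // | c w1 uniq_cpl sh].
have [c_a sh1] : c = a /\ shuffle u (a :: u) w1.
  by case/shuffle_consE: sh => [[_ [-> <-] ?] | [_ [-> <-] /shuffle_sym ?]].
subst c.
have cpl_w1 v : shuffle u v w1 -> v = a :: u.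
  by move/(shuffle_consl a)/(uniq_cpl v).1.
case: w1 sh1 cpl_w1 uniq_cpl {sh} => [/shuffle_nilE[] // | d w2].
move=> sh1 cpl_w1 uniq_cpl.
have sub_u : subseq u w2.
  case/shuffle_consE: sh1 => [[u' -> /shuffle_sym/shuffle_subseq] | [_ [_ <-]]].
    by apply: subseq_trans; apply: subseq_cons.
  exact: shuffle_subseq.
have [v2 sh2] := subseq_shuffle sub_u.
case: (cpl_w1 _ (shuffle_consr d sh2)) => d_a v2_u; subst d v2.
rewrite (IHu w2) // => v; split=> [sh | -> //].
by case: ((uniq_cpl (a :: v)).1 (shuffle_consl a (shuffle_consr a sh))).
Qed.

End Shuffle.

Section Embedding.
Variable T : eqType.
Implicit Types (u v w x : seq T) (m : bitseq).

Lemma sorted_enum_ord n : sorted (relpre (@nat_of_ord n) ltn) (enum 'I_n).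
Proof. by rewrite -sorted_map val_enum_ord iota_ltn_sorted. Qed.

Lemma relpre_ord_ltn_trans n : transitive (relpre (@nat_of_ord n) ltn).
Proof. by move=> j i k /=; apply: ltn_trans. Qed.

Lemma mask_codom_embedding x w (e : 'I_(size x) -> 'I_(size w)) :
  embedding e -> mask [seq k \in codom e | k <- enum 'I_(size w)] w = x.
Proof.
case=> e_mono e_letters.
have codom_sorted : codom e = [seq k <- enum 'I_(size w) | k \in codom e].
  apply: (irr_sorted_eq (@relpre_ord_ltn_trans _)) => [i||| k].
  - exact: ltnn.
  - rewrite codomE.
    exact: (homo_sorted (e := relpre (@nat_of_ord _) ltn) e_mono _
                        (sorted_enum_ord _)).
  - by apply: (sorted_filter (@relpre_ord_ltn_trans _)); apply: sorted_enum_ord.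
  - by rewrite mem_filter mem_enum andbT.
transitivity (map (tnth (in_tuple w)) (codom e)).
  by rewrite [in RHS]codom_sorted (filter_mask (fun k => k \in codom e)) map_mask
             (map_tnth_enum (in_tuple w)).
rewrite -[RHS](map_tnth_enum (in_tuple x)) codomE -map_comp.
by apply: eq_map => i /=; rewrite e_letters.
Qed.

Lemma embedding_mask m w : size m = size w ->
  exists e : 'I_(size (mask m w)) -> 'I_(size w),
    embedding e /\ forall k, (k \in codom e) = nth false m k.
Proof.
move=> size_m; set s := mask m (enum 'I_(size w)).
have size_s : size s == size (mask m w) by rewrite !size_mask ?size_enum_ord.
have mask_w : mask m w = map (tnth (in_tuple w)) s.
  by rewrite map_mask (map_tnth_enum (in_tuple w)).
have sorted_s : sorted (relpre (@nat_of_ord _) ltn) s.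
  by apply: (sorted_mask (@relpre_ord_ltn_trans _)); apply: sorted_enum_ord.
exists (tnth (Tuple size_s)); split; first split.
- move=> i j lt_ij; have k0 := tnth (Tuple size_s) i; rewrite !(tnth_nth k0).
  by apply: (sorted_ltn_nth (@relpre_ord_ltn_trans _) k0 sorted_s);
    rewrite // inE (eqP size_s) ltn_ord.
- move=> i; have k0 := tnth (Tuple size_s) i; have a0 := tnth (in_tuple w) k0.
  rewrite !(tnth_nth a0) !(tnth_nth k0) /=.
  have nth_mask n : nth a0 (mask m w) n = nth a0 (map (tnth (in_tuple w)) s) n.
    by rewrite mask_w.
  by rewrite nth_mask (nth_map k0) ?(eqP size_s) // (tnth_nth a0).
- move=> k; rewrite codomE (map_tnth_enum (Tuple size_s)) /= /s mask_enum_ord.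
  by rewrite mem_filter mem_enum andbT.
Qed.

Lemma in_shuffleP u v w : in_shuffle u v w <-> shuffle u v w.
Proof.
split=> [[_ [e1 [e2 [emb1 emb2 disj cover]]]] | sh].
  have codom_neg : [seq k \in codom e2 | k <- enum 'I_(size w)] =
                   map negb [seq k \in codom e1 | k <- enum 'I_(size w)].
    rewrite -map_comp; apply: eq_map => k /=.
    case: (cover k) => [[i <-] | [j <-]]; rewrite codom_f /=.
      by apply/negbTE/codomP => -[j /disj].
    by apply/esym/negP => /codomP[i /esym/disj].
  rewrite -(mask_codom_embedding emb1) -(mask_codom_embedding emb2) codom_neg.
  by apply: mask_shuffle; rewrite size_map size_enum_ord.
split; first exact: size_shuffle sh.
have [m [size_m <- <-]] := shuffle_mask sh.
have [e1 [emb1 codom1]] := embedding_mask size_m.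
have size_m' : size (map negb m) = size w by rewrite size_map.
have [e2 [emb2 codom2]] := embedding_mask size_m'.
exists e1, e2; split=> // [i j e_eq | k].
  move: (codom_f e1 i) (codom_f e2 j).
  by rewrite codom1 codom2 e_eq (nth_map false) ?size_m // => ->.
case m_k: (nth false m k); [left | right].
  have /codomP[i ->] : k \in codom e1 by rewrite codom1.
  by exists i.
have /codomP[j ->] : k \in codom e2.
  by rewrite codom2 (nth_map false) ?size_m ?m_k.
by exists j.
Qed.

Lemma CsetP w u v : Cset w u v <-> shuffle u v w.
Proof.
split=> [[_ /in_shuffleP //] | sh].
by split; [rewrite (size_shuffle sh) addKn | apply/in_shuffleP].
Qed.

End Embedding.

Unset Implicit Arguments.

Theorem theorem36 (Sigma : eqType) (w u : seq Sigma) :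
  scattered_factor u w ->
  ((forall v : seq Sigma, Cset w u v <-> v = u) <-> w = perfect_shuffle u u).
Proof.
move=> _; apply: iff_trans (unique_shuffle_complementP u w).
split=> uniq_cpl v; apply: iff_trans (uniq_cpl v).
  exact: iff_sym (CsetP w u v).
exact: CsetP.
Qed.
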